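(* Let $\mathcal{M}=(\mathbf{x},\mathbf{p})$ be an auction format satisfying voluntary participation, let $\boldsymbol{\pi}^{(1)},\dots,\boldsymbol{\pi}^{(n)}\in\Delta([K+1])$ be quantile strategies with $s_i:=s_{i,\boldsymbol{\pi}^{(i)}}$, and let $\tilde{\mathcal{M}}$ be the associated auxiliary auction. Let $\mathbf{e}:=(1,0,\dots,0)\in\mathbb{R}^{K+1}$. For $\mathbf{v}\sim\mathcal{D}$, set $\mathbf{b}_{-i}:=(s_\ell(v_\ell))_{\ell\neq i}$. Then \[ \sum_{i\in[n]}\mathbb{E}_{\mathbf{v}_{-i}}\Big[\mathbf{g}_i(\boldsymbol{\pi}^{(i)};\mathbf{b}_{-i})^{\top}\big(\mathbf{e}-\boldsymbol{\pi}^{(i)}\big)\Big]=\mathbb{E}_{\mathbf{v}\sim\mathcal{D}}\Big[\sum_{i\in[n]}p_i\big(s_1(v_1),\dots,s_n(v_n)\big)\Big]-\mathrm{Rev}_{\tilde{\mathcal{M}}}(\mathcal{D}). \]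
   Context: Each bidder $i\in[n]$ has value $v_i$ drawn independently from a continuous distribution $\mathcal{D}_i$ on $[0,1]$ with CDF $F_i$ and quantile function $F_i^{-1}(y):=\inf\{v\in[0,1]:F_i(v)\ge y\}$; $\mathcal{D}:=\mathcal{D}_1\times\cdots\times\mathcal{D}_n$. Bid set $B:=\{j/K:j=0,\dots,K\}$. An auction format is $(\mathbf{x},\mathbf{p})$, $\mathbf{x}:B^n\to\Delta([n])$ (nonnegative entries summing to at most 1), $\mathbf{p}:B^n\to[0,1]^n$; voluntary participation means $p_i(0,\mathbf{b}_{-i})=0$ for all $i$ and $\mathbf{b}_{-i}\in B^{n-1}$. For $\boldsymbol{\pi}\in\Delta([K+1])$ (probability simplex), $\Pi_0:=0$, $\Pi_j:=\sum_{\ell\le j}\pi_\ell$; $s_{i,\boldsymbol{\pi}}$ bids $0$ on $[0,F_i^{-1}(\Pi_1)]$ and $\frac{j-1}{K}$ on $(F_i^{-1}(\Pi_{j-1}),F_i^{-1}(\Pi_j)]$ for $j=2,\dots,K+1$. For $\mathbf{b}_{-i}\in B^{n-1}$, the vector $\mathbf{g}_i(\boldsymbol{\pi};\mathbf{b}_{-i})\in\mathbb{R}^{K+1}$ (the gradient of bidder $i$'s quantile utility) has entries \[ g_{i,k}(\boldsymbol{\pi};\mathbf{b}_{-i}):=\sum_{j=k}^{K}\Big(x_i\big(\tfrac{j-1}{K},\mathbf{b}_{-i}\big)-x_i\big(\tfrac{j}{K},\mathbf{b}_{-i}\big)\Big)F_i^{-1}(\Pi_j)+x_i(1,\mathbf{b}_{-i})-p_i\big(\tfrac{k-1}{K},\mathbf{b}_{-i}\big),\quad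 k\in[K+1]. \] The auxiliary auction $\tilde{\mathcal{M}}=(\tilde{\mathbf{x}},\tilde{\mathbf{p}})$ on $[0,1]^n$: $\tilde{\mathbf{x}}(\mathbf{v}):=\mathbf{x}(s_1(v_1),\dots,s_n(v_n))$, $\tilde p_i(\mathbf{v}):=\tilde x_i(v_i,\mathbf{v}_{-i})v_i-\int_0^{v_i}\tilde x_i(z,\mathbf{v}_{-i})dz$; $\mathrm{Rev}_{\tilde{\mathcal{M}}}(\mathcal{D}):=\mathbb{E}_{\mathbf{v}\sim\mathcal{D}}[\sum_i\tilde p_i(\mathbf{v})]$. *)

From mathcomp Require Import all_boot all_order all_algebra all_classical all_reals all_analysis.
Set Implicit Arguments. Unset Strict Implicit. Unset Printing Implicit Defensive.
Import Order.TTheory GRing.Theory Num.Theory numFieldNormedType.Exports.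
Local Open Scope classical_set_scope.
Local Open Scope ring_scope.

(* Bids are represented by their index j : 'I_K.+1, standing for the bid j/K
   in B = {0, 1/K, ..., 1}. *)

Section Auction.
Variables (R : realType) (n K : nat).

Definition bid_value (j : 'I_K.+1) : R := j%:R / K%:R.

Definition upd (b : 'I_n -> 'I_K.+1) (i : 'I_n) (k : 'I_K.+1) : 'I_n -> 'I_K.+1 :=
  fun l => if l == i then k else b l.

Definition updR (v : 'I_n -> R) (i : 'I_n) (z : R) : 'I_n -> R :=
  fun l => if l == i then z else v l.

Definition alloc_ok (x : ('I_n -> 'I_K.+1) -> 'I_n -> R) : Prop :=
  forall b, (forall i, 0 <= x b i) /\ \sum_(i < n) x b i <= 1.

Definition pay_ok (p : ('I_n -> 'I_K.+1) -> 'I_n -> R) : Prop :=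
  forall b i, 0 <= p b i <= 1.

Definition voluntary_participation (p : ('I_n -> 'I_K.+1) -> 'I_n -> R) : Prop :=
  forall b i, p (upd b i ord0) i = 0.

(* pi in the probability simplex Delta([K+1]); entry pi_j (1-based) is pi (j-1) *)
Definition in_simplex (pi : 'I_K.+1 -> R) : Prop :=
  (forall j, 0 <= pi j) /\ \sum_(j < K.+1) pi j = 1.

(* Pi_j = sum_{l <= j} pi_l  (1-based j), Pi_0 = 0 *)
Definition Pi (pi : 'I_K.+1 -> R) (j : nat) : R :=
  \sum_(l < K.+1 | (l < j)%N) pi l.

Definition quantile (F : R -> R) (y : R) : R :=
  inf [set v : R | 0 <= v <= 1 /\ y <= F v].

Definition qstrat (F : R -> R) (pi : 'I_K.+1 -> R) (v : R) : 'I_K.+1 :=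
  odflt ord0 [pick j : 'I_K.+1 |
     ((j == ord0) && (v <= quantile F (Pi pi 1)))
  || ((0 < j)%N && (quantile F (Pi pi j) < v)
                && (v <= quantile F (Pi pi j.+1)))].

(* gradient g_i(pi; b_{-i}); entry k (0-based) corresponds to the paper's k+1.
   The i-th component of b is ignored. *)
Definition grad (x p : ('I_n -> 'I_K.+1) -> 'I_n -> R) (F : R -> R)
  (pi : 'I_K.+1 -> R) (i : 'I_n) (b : 'I_n -> 'I_K.+1) (k : 'I_K.+1) : R :=
  \sum_(k.+1 <= j < K.+1)
     (x (upd b i (inord j.-1)) i - x (upd b i (inord j)) i)
       * quantile F (Pi pi j)
  + x (upd b i ord_max) i - p (upd b i k) i.

Definition grad_dot (g : 'I_K.+1 -> R) (pi : 'I_K.+1 -> R) : R :=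
  \sum_(k < K.+1) g k * ((k == ord0)%:R - pi k).

Definition aux_x (x : ('I_n -> 'I_K.+1) -> 'I_n -> R)
  (s : 'I_n -> R -> 'I_K.+1) (v : 'I_n -> R) (i : 'I_n) : R :=
  x (fun l => s l (v l)) i.

Definition aux_p (x : ('I_n -> 'I_K.+1) -> 'I_n -> R)
  (s : 'I_n -> R -> 'I_K.+1) (v : 'I_n -> R) (i : 'I_n) : R :=
  aux_x x s v i * v i
  - Rintegral lebesgue_measure `[0, v i]
      (fun z => aux_x x s (updR v i z) i).

End Auction.

Section Prob.
Local Open Scope ereal_scope.

Definition mutually_independent d (T : measurableType d) (R : realType)
  (P : probability T R) (n : nat) (V : 'I_n -> T -> R) : Prop :=
  forall A : 'I_n -> set R, (forall i, measurable (A i)) ->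
    P (\bigcap_(i in [set: 'I_n]) (V i @^-1` A i))
    = \prod_(i < n) P (V i @^-1` A i).

Definition cdfR d (T : measurableType d) (R : realType) (P : probability T R)
  (X : {RV P >-> R}) (r : R) : R := fine (cdf X r).

Definition aux_rev d (T : measurableType d) (R : realType) (P : probability T R)
  (n K : nat) (x : ('I_n -> 'I_K.+1) -> 'I_n -> R)
  (s : 'I_n -> R -> 'I_K.+1) (V : 'I_n -> T -> R) : \bar R :=
  'E_P[fun w => (\sum_(i < n) aux_p x s (fun l => V l w) i)%R].
End Prob.

From mathcomp Require Import all_boot all_order all_algebra all_classical all_reals all_analysis.
From mathcomp Require Import ring lra.
Import Order.TTheory GRing.Theory Num.Theory numFieldNormedType.Exports.
Local Open Scope classical_set_scope.
Local Open Scope ring_scope.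
Set Implicit Arguments. Unset Strict Implicit. Unset Printing Implicit Defensive.

(* Under independence, the bid profile [c] occurs with probability
   [prod_l pis l (c l)], since [s_l] puts mass [pis l k] on bid [k] when [F_l]
   is continuous.  For bidder [i] facing [b_-i], the auxiliary payment
   [x_i(s_i(v)) v - int_0^v x_i(s_i(z)) dz] is constant on each quantile
   segment of [s_i] and equals the threshold sum
   [A_k = sum_(j <= k) (x_i(j) - x_i(j-1)) F_i^-1(Pi_j)] on segment [k].  On the
   other hand [g_0 - g_k = p_i(k) - p_i(0) - A_k] by telescoping, so with
   [p_i(0) = 0] we get [g^T (e - pi) = sum_k pi_k p_i(k) - sum_k pi_k A_k].
   Averaging over [b_-i] and summing over [i] gives both sides as the same
   finite sums over bid profiles. *)


Section Quantile.
Variables (R : realType) (F : R -> R).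
Hypotheses (F_cont : continuous F) (F0 : F 0 = 0) (F1 : F 1 = 1).

Let quantile_set (y : R) := [set v : R | 0 <= v <= 1 /\ y <= F v].

Let quantile_set_lb y : lbound (quantile_set y) 0.
Proof. by move=> v [/andP[]]. Qed.

Let quantile_set1 y : y <= 1 -> quantile_set y 1.
Proof. by move=> y1; split; rewrite ?F1 // ler01 lexx. Qed.

Let has_inf_quantile_set y : y <= 1 -> has_inf (quantile_set y).
Proof. by move=> y1; split; [exists 1; exact: quantile_set1|exists 0]. Qed.

Lemma quantile_itv y : y <= 1 -> 0 <= quantile F y <= 1.
Proof.
move=> y1; apply/andP; split.
  by apply: lb_le_inf; [exists 1; exact: quantile_set1|exact: quantile_set_lb].
by apply: (ge_inf (E := quantile_set y)); [exists 0|exact: quantile_set1].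
Qed.

Lemma le_quantile y1 y2 : y1 <= y2 -> y2 <= 1 -> quantile F y1 <= quantile F y2.
Proof.
move=> y12 y21; apply: lb_le_inf; first by exists 1; exact: quantile_set1.
move=> v [v01 Fv]; apply: (ge_inf (E := quantile_set y1)); first by exists 0.
by split => //; exact: le_trans Fv.
Qed.

(* Continuity is what makes the infimum attained and F invertible on it:
   F < y just right of q and F > y just left of q both contradict q = inf. *)
Lemma quantileK y : 0 <= y <= 1 -> F (quantile F y) = y.
Proof.
move=> /andP[y0 y1]; set q := quantile F y.
have /andP[q0 q1] : 0 <= q <= 1 by exact: quantile_itv.
have lbq : lbound (quantile_set y) q by apply: ge_inf; exists 0.
have Fq : F x @[x --> q] --> F q by exact: F_cont.
apply/eqP; rewrite eq_le; apply/andP; split; last first.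
  rewrite leNgt; apply/negP => Fqy.
  have [e e0 He] := (nbhs_ballP _ _).1 (cvgr_lt _ Fq _ Fqy).
  have [v Sv vq] := inf_adherent e0 (has_inf_quantile_set y1).
  have qv : q <= v by exact: lbq.
  have : F v < y.
    apply: (He v); rewrite /ball /= ler0_norm ?subr_le0 // opprB.
    have vq' : v < q + e := vq.
    lra.
  by case: Sv => _ /le_lt_trans H /H; rewrite ltxx.
have [->|qpos] := eqVneq q 0; first by rewrite F0.
have qgt0 : 0 < q by rewrite lt0r qpos q0.
rewrite leNgt; apply/negP => yFq.
have [e e0 He] := (nbhs_ballP _ _).1 (cvgr_gt _ Fq _ yFq).
set m := Num.min e q.
have m0 : 0 < m by rewrite lt_min e0 qgt0.
have me : m <= e by rewrite ge_min lexx.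
have mq : m <= q by rewrite ge_min lexx orbT.
have yF : y < F (q - m / 2).
  by apply: He; rewrite /ball /= opprB addrC addrNK gtr0_norm ?divr_gt0 //; lra.
have : q <= q - m / 2.
  by apply: lbq; split; [apply/andP; split; lra|exact: ltW].
lra.
Qed.
End Quantile.

Section QuantileStrategy.
Variables (R : realType) (K : nat) (F : R -> R) (pi : 'I_K.+1 -> R).
Local Notation q j := (quantile F (Pi pi j)).
Hypothesis le_q : forall a b : nat, (a <= b)%N -> q a <= q b.

Definition in_bid_segment (j : 'I_K.+1) (v : R) : bool :=
  if (j : nat) == 0%N then v <= q 1 else (q j < v) && (v <= q j.+1).

Lemma in_bid_segment_inj j k v : in_bid_segment j v -> in_bid_segment k v -> j = k.
Proof.
wlog jk : j k / (j <= k)%N.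
  by move=> H; case/orP: (leq_total j k) => [/H//|kj Hj Hk]; exact/esym/(H k j).
rewrite /in_bid_segment.
have [j0|jpos] := eqVneq (j : nat) 0%N; have [k0|kpos] := eqVneq (k : nat) 0%N.
- by move=> _ _; apply/val_inj; rewrite /= j0 k0.
- move=> v1 /andP[kv _].
  have k1 : (1 <= k)%N by rewrite lt0n.
  by have := le_lt_trans (le_trans v1 (le_q k1)) kv; rewrite ltxx.
- by move: jk; rewrite k0 leqn0 (negbTE jpos).
- move=> /andP[jv vj] /andP[kv vk].
  case: (ltngtP j k) => [jlt|kj|/val_inj //]; last by move: jk; rewrite leqNgt kj.
  by have := le_lt_trans (le_trans vj (le_q jlt)) kv; rewrite ltxx.
Qed.

Lemma qstrat_pickE v : qstrat F pi v = odflt ord0 [pick j | in_bid_segment j v].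
Proof. by rewrite /qstrat; congr odflt; apply: eq_pick => -[[|j] ?]; rewrite /= ?orbF. Qed.

Lemma qstratE k v : in_bid_segment k v -> qstrat F pi v = k.
Proof.
move=> Hk; rewrite qstrat_pickE.
by case: pickP => [j /in_bid_segment_inj/(_ Hk) ->|/(_ k)]; rewrite ?Hk.
Qed.

Lemma qstrat_neq0 v : qstrat F pi v != ord0 -> in_bid_segment (qstrat F pi v) v.
Proof. by rewrite qstrat_pickE; case: pickP => [j|] //=; rewrite eqxx. Qed.

Lemma qstrat_eq0 v : qstrat F pi v = ord0 -> v <= q 1 \/ q K.+1 < v.
Proof.
move=> s0; have [|v1] := leP v (q 1); first by left.
right; rewrite ltNge; apply/negP.
have segment_below m :
    v <= q m.+1 -> exists j, (0 < j <= m)%N /\ q j < v /\ v <= q j.+1.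
  elim: m => [|m IH] vm; first by move: vm v1; lra.
  have [/IH[j [/andP[j0 jm] rest]]|vm1] := leP v (q m.+1).
    by exists j; rewrite j0 /= leqW.
  by exists m.+1; rewrite /= leqnn.
move=> /segment_below[j [/andP[j0 jK] [jv vj]]].
have := qstratE (k := Ordinal (jK : (j < K.+1)%N)) (v := v).
rewrite s0 /in_bid_segment /= eqn0Ngt j0 jv vj => /(_ isT)/(congr1 val) /= j00.
by rewrite -j00 in j0.
Qed.

Lemma qstrat_preimage_neq0 (k : 'I_K.+1) : k != ord0 ->
  [set v | qstrat F pi v = k] = `]q k, q k.+1]%classic.
Proof.
move=> k0; have k0' : (k : nat) != 0%N by [].
apply/seteqP; split => v /=.
  move=> sk; have := qstrat_neq0 (v := v); rewrite sk => /(_ k0).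
  by rewrite /in_bid_segment (negbTE k0') in_itv.
by rewrite in_itv /= => kvk; apply: qstratE; rewrite /in_bid_segment (negbTE k0').
Qed.

Lemma measurable_qstrat_preimage (k : 'I_K.+1) : measurable [set v | qstrat F pi v = k].
Proof.
have [->|k0] := eqVneq k ord0; last first.
  by rewrite qstrat_preimage_neq0 //; exact: measurable_itv.
have -> : [set v | qstrat F pi v = ord0] =
    ~` \bigcup_(j in [set j | j != ord0]) [set v | qstrat F pi v = j].
  apply/seteqP; split => v /=.
    by move=> s0 [j /= j0 sj]; rewrite -sj s0 eqxx in j0.
  move=> H; have [//|s0] := eqVneq (qstrat F pi v) ord0.
  by exfalso; apply: H; exists (qstrat F pi v).
apply/measurableC/fin_bigcup_measurable; first exact: finite_finset.
by move=> j /= j0; rewrite qstrat_preimage_neq0 //; exact: measurable_itv.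
Qed.
End QuantileStrategy.

Section FiniteRV.
Local Open Scope ereal_scope.
Context d (T : measurableType d) (R : realType) (P : probability T R).
Variables (U : finType) (Y : T -> U).
Hypothesis mY : forall u, measurable (Y @^-1` [set u]).

Lemma finite_rv_indicE (f : U -> T -> R) w :
  f (Y w) w = (\sum_(u : U) f u w * \1_(Y @^-1` [set u]) w)%R.
Proof.
rewrite (bigD1 (Y w)) //= indicE mem_set // mulr1 big1 ?addr0 //.
move=> u /negbTE uY; rewrite indicE memNset ?mulr0 //= => Yu.
by move: uY; rewrite Yu eqxx.
Qed.

Lemma measurable_finite_rv (f : U -> T -> R) :
  (forall u, measurable_fun setT (f u)) -> measurable_fun setT (fun w => f (Y w) w).
Proof.
move=> mf; rewrite (_ : (fun w => _) = fun w => \sum_(u : U) f u w * \1_(Y @^-1` [set u]) w)%R.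
  by apply: measurable_sum => u; exact: measurable_realfun.measurable_funM.
by apply: funext => w; rewrite finite_rv_indicE.
Qed.

Lemma integral_finite_rv (f : U -> R) :
  \int[P]_w (f (Y w))%:E = \sum_(u : U) (f u)%:E * P (Y @^-1` [set u]).
Proof.
under eq_integral => w _ do rewrite (finite_rv_indicE (fun u _ => f u)) -sumEFin.
rewrite integral_sum //; last first.
  move=> u; under eq_fun do rewrite EFinM.
  by apply: integrableZl => //; exact: integrable_indic.
apply: eq_bigr => u _; under eq_integral do rewrite EFinM.
rewrite integralZl //; last exact: integrable_indic.
by rewrite integral_indic // setIT.
Qed.

Lemma expectation_finite_rv (f : U -> R) :
  'E_P[fun w => f (Y w)] = \sum_(u : U) (f u)%:E * P (Y @^-1` [set u]).
Proof. by rewrite unlock integral_finite_rv. Qed.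

Lemma sum_probability_fibers : \sum_(u : U) P (Y @^-1` [set u]) = 1.
Proof.
have := integral_finite_rv (fun _ => 1%R).
rewrite integral_cst //= probability_setT mul1e => ->.
by apply: eq_bigr => u _; rewrite mul1e.
Qed.
End FiniteRV.

Section Simplex.
Variables (R : realType) (K : nat) (pi : 'I_K.+1 -> R).
Hypothesis pi_simplex : in_simplex pi.

Lemma Pi_ge0 j : 0 <= Pi pi j.
Proof. by apply: sumr_ge0 => l _; case: pi_simplex. Qed.

Lemma le_Pi a b : (a <= b)%N -> Pi pi a <= Pi pi b.
Proof.
move=> ab; rewrite /Pi [X in _ <= X]big_mkcond [X in X <= _]big_mkcond /=.
apply: ler_sum => l _; case: ifP => la; first by rewrite (leq_trans la ab).
by case: ifP => // _; case: pi_simplex.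
Qed.

Lemma Pi_le1 j : Pi pi j <= 1.
Proof.
case: pi_simplex => pi_ge0 <-; rewrite /Pi [X in X <= _]big_mkcond /=.
by apply: ler_sum => l _; case: ifP => // _; exact: pi_ge0.
Qed.

Lemma Pi_last : Pi pi K.+1 = 1.
Proof. by case: pi_simplex => _ <-; apply: eq_bigl => l; rewrite ltn_ord. Qed.

Lemma PiS (k : 'I_K.+1) : Pi pi k.+1 = Pi pi k + pi k.
Proof.
rewrite /Pi (bigD1 k) //= addrC; congr (_ + _); apply: eq_bigl => l.
by rewrite ltnS -(inj_eq val_inj) /= ltn_neqAle andbC.
Qed.
End Simplex.

Section OneBidder.
Local Open Scope ereal_scope.
Context d (T : measurableType d) (R : realType) (P : probability T R).
Variables (X : {RV P >-> R}) (K : nat) (pi : 'I_K.+1 -> R).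
Hypotheses (X01 : P (X @^-1` `[0%R, 1%R]) = 1) (F_cont : continuous (cdfR X))
  (pi_simplex : in_simplex pi).
Local Notation F := (cdfR X).
Local Notation q j := (quantile F (Pi pi j)).

Let measurable_X_itv (i : interval R) : measurable (X @^-1` [set` i]).
Proof. by apply: measurable_funPTI; exact: measurable_itv. Qed.
Local Hint Resolve measurable_X_itv : core.

Lemma cdfRE r : (F r)%:E = P (X @^-1` `]-oo, r]).
Proof. by rewrite /cdfR fineK // fin_num_measure. Qed.

Lemma probability_lt0 : P (X @^-1` `]-oo, 0%R[) = 0.
Proof.
apply/eqP; rewrite eq_le measure_ge0 andbT.
have -> : (0 : \bar R) = P (~` (X @^-1` `[0%R, 1%R])).
  by rewrite probability_setC // X01 subee.
rewrite le_measure ?inE //; first exact/measurableC.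
move=> w /=; rewrite !in_itv /= => w0 /andP[w0' _].
by move: w0; rewrite ltNge w0'.
Qed.

Lemma cdfR1 : F 1 = 1%R.
Proof.
apply/eqP; rewrite -(@eqe R) cdfRE eq_le probability_le1 //= -X01.
by rewrite le_measure ?inE // => w /=; rewrite !in_itv /= => /andP[].
Qed.

Lemma cdfR_ge0 r : (0 <= F r)%R.
Proof. by rewrite -lee_fin cdfRE. Qed.

Lemma cdfR_lt0 r : (r < 0)%R -> F r = 0%R.
Proof.
move=> r0; apply/eqP; rewrite -(@eqe R) cdfRE eq_le measure_ge0 andbT.
have <- : P (X @^-1` `]-oo, 0%R[) = (0%R)%:E by exact: probability_lt0.
rewrite le_measure ?inE // => w /=; rewrite !in_itv /= => wr.
exact: le_lt_trans wr r0.
Qed.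

Lemma cdfR0 : F 0 = 0%R.
Proof.
apply/eqP; rewrite eq_le cdfR_ge0 andbT leNgt; apply/negP => F0_gt0.
have F0 : F x @[x --> (0%R : R)] --> F 0%R by exact: F_cont.
have [e e0 He] := (nbhs_ballP _ _).1 (cvgr_gt _ F0 _ F0_gt0).
have e2 : (0 < e / 2)%R by rewrite divr_gt0.
have : (0 < F (- (e / 2)))%R.
  apply: He; rewrite /ball /= sub0r opprK gtr0_norm //.
  by rewrite ltr_pdivrMr // ltr_pMr // ltr1n.
by rewrite cdfR_lt0 ?ltxx // oppr_lt0.
Qed.

Lemma probability_itv_oc a b : (a <= b)%R -> P (X @^-1` `]a, b]) = (F b - F a)%:E.
Proof.
move=> ab; rewrite EFinB !cdfRE.
have -> : X @^-1` `]-oo, b] = X @^-1` `]-oo, a] `|` X @^-1` `]a, b].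
  apply/seteqP; split => w /=; rewrite !in_itv /=.
    by move=> wb; case: (leP (X w) a) => wa; [left|right; apply/andP].
  by case=> [wa|/andP[_ ->//]]; exact: le_trans wa ab.
rewrite measureU //; last first.
  apply/seteqP; split => w //= [].
  by rewrite !in_itv /= => wa /andP[]; rewrite ltNge wa.
set A := P (X @^-1` `]-oo, a]); set B := P (X @^-1` `]a, b]).
have -> : (A + B)%R = A + B by [].
by rewrite [A + B]addeC addeK // fin_num_measure.
Qed.

Lemma le_quantile_Pi a b : (a <= b)%N -> (q a <= q b)%R.
Proof. by move=> ab; apply: le_quantile; [exact: cdfR1|exact: le_Pi|exact: Pi_le1]. Qed.

Lemma quantile_Pi_ge0 j : (0 <= q j)%R.
Proof. by have /andP[] := quantile_itv cdfR1 (Pi_le1 pi_simplex j). Qed.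

Lemma cdfR_quantile_Pi j : F (q j) = Pi pi j.
Proof.
by apply: quantileK; [exact: F_cont|exact: cdfR0|exact: cdfR1|rewrite Pi_ge0 // Pi_le1].
Qed.

Let measurable_X_qstrat k : measurable (X @^-1` [set v | qstrat F pi v = k]).
Proof.
by apply: measurable_funPTI; apply: measurable_qstrat_preimage; exact: le_quantile_Pi.
Qed.

(* The positive bids are read off the interval probabilities; bid 0 gets the
   remaining mass. *)
Lemma probability_qstrat (k : 'I_K.+1) :
  P (X @^-1` [set v | qstrat F pi v = k]) = (pi k)%:E.
Proof.
have Pk j : j != ord0 -> P (X @^-1` [set v | qstrat F pi v = j]) = (pi j)%:E.
  move=> j0; rewrite qstrat_preimage_neq0 //; last exact: le_quantile_Pi.
  by rewrite probability_itv_oc ?le_quantile_Pi // !cdfR_quantile_Pi PiS // addrC addKr.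
have [->|] := eqVneq k ord0; last exact: Pk.
have := sum_probability_fibers P (Y := fun w => qstrat F pi (X w)) measurable_X_qstrat.
rewrite (bigD1 ord0) //= (eq_bigr (fun j => (pi j)%:E)) // sumEFin.
have : (pi ord0 + \sum_(j < K.+1 | j != ord0) pi j = 1)%R.
  by case: pi_simplex => _ <-; rewrite [RHS](bigD1 ord0).
move=> sum1; set A := P _; set s := (\sum_(j < K.+1 | j != ord0) pi j)%R => tot.
have : A + s%:E = (pi ord0)%:E + s%:E by rewrite -EFinD sum1; exact: tot.
by move/(congr1 (fun z => z - s%:E)); rewrite !addeK.
Qed.

Lemma probability_supp : P (X @^-1` `[0%R, q K.+1]) = 1.
Proof.
have q0 := quantile_Pi_ge0 K.+1.
have := cdfRE (q K.+1); rewrite cdfR_quantile_Pi.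
have -> : X @^-1` `]-oo, q K.+1] = X @^-1` `]-oo, 0%R[ `|` X @^-1` `[0%R, q K.+1].
  apply/seteqP; split => w /=; rewrite !in_itv /=.
    by move=> wq; case: (ltP (X w) 0%R) => w0; [left|right; apply/andP].
  by case=> [w0|/andP[_ ->//]]; exact: le_trans (ltW w0) q0.
rewrite measureU //; last first.
  apply/seteqP; split => w //= []; rewrite !in_itv /= => w0 /andP[w0' _].
  by move: w0; rewrite ltNge w0'.
move=> E; have : 1 = P (X @^-1` `]-oo, 0%R[) + P (X @^-1` `[0%R, q K.+1]).
  by move: E; rewrite {1}(Pi_last pi_simplex).
by rewrite probability_lt0 add0e.
Qed.
End OneBidder.

(* Myerson's payment for the step allocation [xs] jumping at the points [q j]. *)
Definition threshold_sum (R : pzRingType) (K : nat) (xs : 'I_K.+1 -> R) (q : nat -> R)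
    (k : nat) : R :=
  \sum_(1 <= j < k.+1) (xs (inord j) - xs (inord j.-1)) * q j.

Section ThresholdPayment.
Variables (R : realType) (K : nat) (F : R -> R) (pi : 'I_K.+1 -> R) (xs : 'I_K.+1 -> R).
Local Notation q j := (quantile F (Pi pi j)).
Hypotheses (le_q : forall a b : nat, (a <= b)%N -> q a <= q b) (q_ge0 : forall j, 0 <= q j).
Local Notation mu := (@lebesgue_measure R).
Local Notation alloc := (fun z => xs (qstrat F pi z)).

Definition alloc_area (t : R) : R := Rintegral mu `[0, t] alloc.

Let measurable_alloc : measurable_fun setT alloc.
Proof.
apply: (measurable_finite_rv (measurable_qstrat_preimage le_q) (f := fun k _ => xs k)) => k.
exact: measurable_cst.
Qed.

Let lebesgue_measure_itv_lty (b1 b2 : bool) (a b : R) :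
  (mu [set` Interval (BSide b1 a) (BSide b2 b)] < +oo)%E.
Proof. by rewrite lebesgue_measure_itv; case: ifP => _ //; rewrite -EFinB ltry. Qed.

Let integrable_alloc (b1 b2 : bool) (a b : R) :
  mu.-integrable [set` Interval (BSide b1 a) (BSide b2 b)] (EFin \o alloc).
Proof.
apply: measurable_bounded_integrable => //.
- exact: lebesgue_measure_itv_lty.
- exact: measurable_funS measurable_alloc.
exists (\sum_(k < K.+1) `|xs k|); split; first exact: num_real.
move=> M HM z _ /=; rewrite (le_trans _ (ltW HM)) //.
by rewrite (bigD1 (qstrat F pi z)) //= lerDl; exact: sumr_ge0.
Qed.

Let Rintegral_itv_oc_cst (a b c : R) : a <= b ->
  (forall z, a < z <= b -> alloc z = c) -> Rintegral mu `]a, b] alloc = c * (b - a).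
Proof.
move=> ab Hz; transitivity (Rintegral mu `]a, b] (fun=> c)).
  by apply: eq_Rintegral => z; rewrite inE /= in_itv /= => /Hz.
rewrite Rintegral_cst // [X in fine X](_ : _ = (b - a)%:E) //.
apply: eq_trans (lebesgue_measure_itv _) _; rewrite /= lte_fin.
case: ltP => [_|ba]; first by rewrite EFinB.
have -> : b = a by apply: le_anti; rewrite ba ab.
by rewrite subrr.
Qed.

Lemma alloc_areaD a b : 0 <= a -> a <= b ->
  alloc_area b = alloc_area a + Rintegral mu `]a, b] alloc.
Proof.
move=> a0 ab; rewrite /alloc_area.
rewrite (@itv_bndbnd_setU _ _ (BLeft 0) (BRight a) (BRight b)) ?bnd_simp //.
rewrite Rintegral_setU //.
- rewrite -itv_bndbnd_setU ?bnd_simp //.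
- apply/disj_setPS => z [] /=; rewrite !in_itv /= => /andP[_ za] /andP[az _].
  by move: za; rewrite leNgt az.
Qed.

Lemma alloc_area_first t : 0 <= t <= q 1 -> alloc_area t = xs ord0 * t.
Proof.
move=> /andP[t0 t1]; rewrite /alloc_area.
transitivity (Rintegral mu `[0, t] (fun=> xs ord0)).
  apply: eq_Rintegral => z; rewrite inE /= in_itv /= => /andP[_ zt].
  by congr xs; apply: qstratE => //; rewrite /in_bid_segment /= (le_trans zt t1).
rewrite Rintegral_cst // [X in fine X](_ : _ = t%:E) //.
apply: eq_trans (lebesgue_measure_itv _) _; rewrite /= lte_fin.
case: ltP => [_|tle]; first by rewrite -EFinB subr0.
by have -> : t = 0 by apply: le_anti; rewrite tle t0.
Qed.

Lemma alloc_area_step (k : 'I_K.+1) t : (0 < k)%N -> q k <= t <= q k.+1 ->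
  alloc_area t = alloc_area (q k) + xs k * (t - q k).
Proof.
move=> k0 /andP[kt tk]; rewrite (alloc_areaD (q_ge0 _) kt); congr (_ + _).
apply: Rintegral_itv_oc_cst => // z /andP[kz zt]; congr xs; apply: qstratE => //.
by rewrite /in_bid_segment eqn0Ngt k0 /= kz (le_trans zt tk).
Qed.

Lemma alloc_area_segment (k : nat) t : (k <= K)%N ->
  (if k == 0%N then 0 <= t <= q 1 else q k <= t <= q k.+1) ->
  xs (inord k) * t - alloc_area t = threshold_sum xs (fun j => q j) k.
Proof.
elim: k t => [|k IH] t kK /=.
  move=> Ht; rewrite alloc_area_first // /threshold_sum big_geq //.
  by rewrite (_ : inord 0 = ord0) ?subrr //; apply/val_inj; rewrite /= inordK.
move=> /andP[kt tk]; have kK' : (k.+1 < K.+1)%N by [].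
rewrite (@alloc_area_step (Ordinal kK')) ?kt //=.
have IHk := IH (q k.+1) (ltnW kK).
have Hq : if k == 0%N then 0 <= q k.+1 <= q 1 else q k <= q k.+1 <= q k.+1.
  by case: eqP => [->|_]; rewrite ?q_ge0 lexx ?andbT // le_q.
rewrite /threshold_sum big_nat_recr //= -/(threshold_sum xs _ k) -(IHk Hq).
rewrite (_ : inord k.+1 = Ordinal kK'); last by apply/val_inj; rewrite /= inordK.
ring.
Qed.

Lemma threshold_payment t : 0 <= t <= q K.+1 ->
  xs (qstrat F pi t) * t - alloc_area t = threshold_sum xs (fun j => q j) (qstrat F pi t).
Proof.
move=> /andP[t0 tK]; rewrite -[X in xs X]inord_val; apply: alloc_area_segment.
  by rewrite -ltnS ltn_ord.
have [s0|s0] := eqVneq (qstrat F pi t) ord0.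
  rewrite s0 /= t0 /=; case: (qstrat_eq0 le_q s0) => // Kt.
  by move: (le_lt_trans tK Kt); rewrite ltxx.
have s0' : ((qstrat F pi t : nat) == 0%N) = false by exact/negbTE.
by have := qstrat_neq0 s0; rewrite /in_bid_segment s0' => /andP[/ltW -> ->].
Qed.

Lemma le_alloc_area : (forall k, 0 <= xs k) -> {homo alloc_area : a b / a <= b}.
Proof.
move=> xs_ge0 a b ab; have [a0|a0] := ltP a 0.
  rewrite {1}/alloc_area set_itv_ge ?Rintegral_set0; last by rewrite bnd_simp -ltNge.
  by apply: Rintegral_ge0 => z _.
by rewrite (alloc_areaD a0 ab) lerDl; apply: Rintegral_ge0 => z _.
Qed.
End ThresholdPayment.

Section Profiles.
Variables (R : realType) (n K : nat).
Local Notation prof := {ffun 'I_n -> 'I_K.+1}.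

Definition set_bid (c : prof) (i : 'I_n) (k : 'I_K.+1) : prof := [ffun l => upd c i k l].

Lemma upd_id (b : 'I_n -> 'I_K.+1) i : upd b i (b i) = b.
Proof. by apply: funext => l; rewrite /upd; case: eqP => // ->. Qed.

Lemma upd_set_bid (c : prof) i k j : upd (set_bid c i k) i j = upd c i j.
Proof. by apply: funext => l; rewrite /upd ffunE /upd; case: eqP. Qed.

Lemma sum_prof_bid (i : 'I_n) (Th : prof -> 'I_K.+1 -> R) :
  (forall c k k', Th (set_bid c i k') k = Th c k) ->
  \sum_(c : prof) Th c (c i) = \sum_(c : prof | c i == ord0) \sum_(k < K.+1) Th c k.
Proof.
have set_bidK c k k' : set_bid (set_bid c i k) i k' = set_bid c i k'.
  by apply/ffunP => l; rewrite !ffunE /upd ffunE /upd; case: eqP.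
have set_bid_at c k : set_bid c i k i = k by rewrite ffunE /upd eqxx.
have set_bid_id c : set_bid c i (c i) = c by apply/ffunP => l; rewrite ffunE upd_id.
move=> Th_inv; rewrite (partition_big (fun c : prof => c i) xpredT) //=.
rewrite [RHS]exchange_big /=; apply: eq_bigr => k _.
rewrite (reindex_onto (fun c => set_bid c i k) (fun c => set_bid c i ord0)) /=.
  apply: eq_big => c; last by move=> _; rewrite set_bid_at Th_inv.
  rewrite set_bid_at eqxx /=; apply/eqP/eqP => [<-|c0]; first by rewrite set_bid_at.
  by rewrite set_bidK -c0 set_bid_id.
by move=> c /eqP ck; rewrite set_bidK -ck set_bid_id.
Qed.

Variable pis : 'I_n -> 'I_K.+1 -> R.

Definition prof_weight (c : prof) : R := \prod_(l < n) pis l (c l).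

Lemma sum_prof_weight (i : 'I_n) (Th : prof -> 'I_K.+1 -> R) :
  (forall c k k', Th (set_bid c i k') k = Th c k) ->
  \sum_(c : prof) prof_weight c * Th c (c i) =
  \sum_(c : prof | c i == ord0)
     (\prod_(l < n | l != i) pis l (c l)) * \sum_(k < K.+1) pis i k * Th c k.
Proof.
move=> Th_inv; pose W (c : prof) := \prod_(l < n | l != i) pis l (c l).
rewrite (eq_bigr (fun c => (fun c k => pis i k * W c * Th c k) c (c i))); last first.
  by move=> c _; rewrite /prof_weight (bigD1 i).
rewrite (sum_prof_bid (Th := fun c k => pis i k * W c * Th c k)); last first.
  move=> c k k'; rewrite Th_inv; congr (_ * _ * _).
  by apply: eq_bigr => l /negbTE li; rewrite ffunE /upd li.
by apply: eq_bigr => c _; rewrite mulr_sumr; apply: eq_bigr => k _; rewrite /W; ring.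
Qed.
End Profiles.

Section GradientIdentity.
Variables (R : realType) (n K : nat) (x p : ('I_n -> 'I_K.+1) -> 'I_n -> R).

Lemma grad_dotE (g pi : 'I_K.+1 -> R) :
  grad_dot g pi = g ord0 - \sum_(k < K.+1) pi k * g k.
Proof.
rewrite /grad_dot; under eq_bigr do rewrite mulrBr.
rewrite sumrB (bigD1 ord0) //= mulr1 big1 ?addr0; last by move=> k /negbTE ->; rewrite mulr0.
by congr (_ - _); apply: eq_bigr => k _; rewrite mulrC.
Qed.

(* [g_0 - g_k] telescopes to [p_k - p_0] minus the threshold sum up to [k], and
   voluntary participation kills [p_0]. *)
Lemma grad_dot_payment (F : R -> R) (pi : 'I_K.+1 -> R) (i : 'I_n) (b : 'I_n -> 'I_K.+1) :
  p (upd b i ord0) i = 0 -> \sum_(k < K.+1) pi k = 1 ->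
  grad_dot (grad x p F pi i b) pi =
  \sum_(k < K.+1) pi k * p (upd b i k) i
  - \sum_(k < K.+1) pi k *
      threshold_sum (fun k => x (upd b i k) i) (fun j => quantile F (Pi pi j)) k.
Proof.
move=> p0 pi1.
set D := fun j : nat => (x (upd b i (inord j.-1)) i - x (upd b i (inord j)) i)
   * quantile F (Pi pi j).
set H := fun k : 'I_K.+1 => \sum_(k.+1 <= j < K.+1) D j + x (upd b i ord_max) i.
have gradE k : grad x p F pi i b k = H k - p (upd b i k) i by [].
have HA (k : 'I_K.+1) : threshold_sum (fun k => x (upd b i k) i)
    (fun j => quantile F (Pi pi j)) k = H k - H ord0.
  have -> : threshold_sum (fun k => x (upd b i k) i) (fun j => quantile F (Pi pi j)) k
      = - \sum_(1 <= j < k.+1) D j.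
    by rewrite /threshold_sum -sumrN; apply: eq_bigr => j _; rewrite /D; ring.
  by rewrite /H /= (@big_cat_nat _ _ _ k.+1 1 K.+1) //=; ring.
have sumH : \sum_(k < K.+1) pi k * H ord0 = H ord0 by rewrite -mulr_suml pi1 mul1r.
rewrite grad_dotE gradE p0 subr0.
under eq_bigr do rewrite gradE mulrBr.
under [X in _ = _ - X]eq_bigr do rewrite HA mulrBr.
by rewrite !sumrB sumH; ring.
Qed.
End GradientIdentity.

Section ExpectedGradient.
Variables (R : realType) (n K : nat) (x p : ('I_n -> 'I_K.+1) -> 'I_n -> R).
Variables (F : 'I_n -> R -> R) (pis : 'I_n -> 'I_K.+1 -> R).
Hypotheses (vp : voluntary_participation p) (sum_pis : forall i, \sum_(k < K.+1) pis i k = 1).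
Local Notation prof := {ffun 'I_n -> 'I_K.+1}.
Local Notation w := (prof_weight pis).
Local Notation thr i b := (threshold_sum (fun k => x (upd b i k) i)
                            (fun j => quantile (F i) (Pi (pis i) j))).

Lemma grad_set_bid (c : prof) i k :
  grad x p (F i) (pis i) i (set_bid c i k) = grad x p (F i) (pis i) i c.
Proof.
apply: funext => j; rewrite /grad !upd_set_bid.
by under eq_bigr do rewrite !upd_set_bid.
Qed.

Lemma expected_grad_dot i :
  \sum_(c : prof) w c * grad_dot (grad x p (F i) (pis i) i c) (pis i)
  = \sum_(c : prof) w c * p c i - \sum_(c : prof) w c * thr i c (c i).
Proof.
rewrite (sum_prof_weight pis (i := i)
  (Th := fun c _ => grad_dot (grad x p (F i) (pis i) i c) (pis i))); last first.
  by move=> c k k'; rewrite grad_set_bid.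
rewrite [X in _ = X - _](eq_bigr (fun c => w c * p (upd c i (c i)) i)) => [|c _]; last first.
  by rewrite upd_id.
rewrite (sum_prof_weight pis (i := i) (Th := fun c k => p (upd c i k) i)); last first.
  by move=> c k k'; rewrite upd_set_bid.
rewrite (sum_prof_weight pis (i := i) (Th := fun c k => thr i c k)); last first.
  by move=> c k k'; congr threshold_sum; apply: funext => k''; rewrite upd_set_bid.
rewrite -sumrB; apply: eq_bigr => c _.
by rewrite -mulr_suml sum_pis mul1r grad_dot_payment ?vp ?sum_pis // mulrBr.
Qed.
End ExpectedGradient.

Section BidProfile.
Local Open Scope ereal_scope.
Context d (T : measurableType d) (R : realType) (P : probability T R) (n K : nat).
Variables (V : 'I_n -> {RV P >-> R}) (x : ('I_n -> 'I_K.+1) -> 'I_n -> R)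
  (pis : 'I_n -> 'I_K.+1 -> R).
Hypotheses (x_ok : alloc_ok x) (pis_simplex : forall i, in_simplex (pis i))
  (V_indep : mutually_independent P (fun i => (V i : T -> R)))
  (V01 : forall i, P (V i @^-1` `[0%R, 1%R]) = 1)
  (F_cont : forall i, continuous (cdfR (V i))).
Local Notation prof := {ffun 'I_n -> 'I_K.+1}.
Local Notation F i := (cdfR (V i)).
Local Notation s i := (qstrat (F i) (pis i)).
Local Notation q i j := (quantile (F i) (Pi (pis i) j)).
Local Notation thr i b := (threshold_sum (fun k => x (upd b i k) i)
                            (fun j => q i j)).

Definition bid_profile (w : T) : prof := [ffun l => s l (V l w)].

Let le_q i := le_quantile_Pi (V01 i) (pis_simplex i).

Lemma bid_profile_preimage (c : prof) :
  bid_profile @^-1` [set c] = \bigcap_(l in [set: 'I_n]) (V l @^-1` [set v | s l v = c l]).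
Proof.
apply/seteqP; split => w /=; first by move=> <- l _; rewrite ffunE.
by move=> H; apply/ffunP => l; rewrite ffunE; exact: H.
Qed.

Lemma measurable_bid_profile_preimage (c : prof) : measurable (bid_profile @^-1` [set c]).
Proof.
rewrite bid_profile_preimage; apply: fin_bigcap_measurable; first exact: finite_finset.
by move=> l _; apply: measurable_funPTI; exact: measurable_qstrat_preimage (le_q l) _.
Qed.

Lemma probability_bid_profile (c : prof) :
  P (bid_profile @^-1` [set c]) = (prof_weight pis c)%:E.
Proof.
rewrite bid_profile_preimage V_indep; last first.
  by move=> l; exact: measurable_qstrat_preimage (le_q l) _.
rewrite /prof_weight -prodEFin; apply: eq_bigr => l _.
exact: (probability_qstrat (V01 l) (@F_cont l) (pis_simplex l)).
Qed.

Lemma expectation_bid_profile (f : prof -> R) :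
  'E_P[fun w => f (bid_profile w)] = (\sum_(c : prof) f c * prof_weight pis c)%:E.
Proof.
rewrite (expectation_finite_rv P measurable_bid_profile_preimage) -sumEFin.
by apply: eq_bigr => c _; rewrite probability_bid_profile EFinM.
Qed.

Lemma aux_pE w i :
  aux_p x (fun l => s l) (fun l => V l w) i =
  (x (bid_profile w) i * V i w
   - alloc_area (F i) (pis i) (fun k => x (upd (bid_profile w) i k) i) (V i w))%R.
Proof.
rewrite /aux_p /aux_x (_ : (fun l => s l (V l w)) = bid_profile w); last first.
  by apply: funext => l; rewrite ffunE.
congr (_ - _)%R; apply: eq_Rintegral => z _; congr (x _ i).
by apply: funext => l; rewrite /updR /upd ffunE; case: eqP => // ->.
Qed.

Lemma sum_aux_p_supp w : (forall i, 0 <= V i w <= q i K.+1)%R ->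
  (\sum_(i < n) aux_p x (fun l => s l) (fun l => V l w) i =
   \sum_(i < n) thr i (bid_profile w) (bid_profile w i))%R.
Proof.
move=> Vw; apply: eq_bigr => i _; rewrite aux_pE.
have -> : x (bid_profile w) i = x (upd (bid_profile w) i (s i (V i w))) i.
  by rewrite -[in LHS](upd_id (bid_profile w) i) ffunE.
rewrite (threshold_payment _ (le_q i) (quantile_Pi_ge0 (V01 i) (pis_simplex i)) (Vw i)).
by rewrite ffunE.
Qed.

Lemma measurable_sum_aux_p :
  measurable_fun setT (fun w => \sum_(i < n) aux_p x (fun l => s l) (fun l => V l w) i)%R.
Proof.
apply: measurable_sum => i; under eq_fun do rewrite aux_pE.
apply: (measurable_finite_rv measurable_bid_profile_preimage
  (f := fun c w => x c i * V i w - alloc_area (F i) (pis i) (fun k => x (upd c i k) i) (V i w))%R).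
move=> c; apply: measurable_realfun.measurable_funB.
  exact/measurable_realfun.measurable_funM/measurable_funPT.
apply: measurableT_comp (measurable_funPT _).
apply: measurable_realfun.nondecreasing_measurable => //.
by apply: (le_alloc_area (le_q i)) => k; case: (x_ok (upd c i k)).
Qed.

(* The threshold formula only holds below [q i K.+1], which is almost sure. *)
Lemma expectation_sum_aux_p :
  aux_rev P x (fun i => s i) (fun i => (V i : T -> R)) =
  (\sum_(c : prof) (\sum_(i < n) thr i c (c i)) * prof_weight pis c)%:E.
Proof.
pose supp := \bigcap_(i in [set: 'I_n]) (V i @^-1` `[0%R, q i K.+1]).
have msupp : measurable supp.
  apply: fin_bigcap_measurable; first exact: finite_finset.
  by move=> i _; apply: measurable_funPTI; exact: measurable_itv.
have Psupp : P supp = 1.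
  rewrite /supp V_indep; last by move=> i; exact: measurable_itv.
  by rewrite big1 // => i _; exact: probability_supp (V01 i) (@F_cont i) (pis_simplex i).
rewrite /aux_rev -expectation_bid_profile !expectation.unlock; apply: ae_eq_integral => //.
- exact/measurable_realfun.measurable_EFinP/measurable_sum_aux_p.
- apply/measurable_realfun.measurable_EFinP.
  apply: (measurable_finite_rv measurable_bid_profile_preimage
    (f := fun (c : prof) (_ : T) => \sum_(i < n) thr i c (c i))%R) => c.
  exact: measurable_cst.
exists (~` supp); split; first exact: measurableC.
  by have := probability_setC P msupp; rewrite Psupp subee.
by move=> w /= Nw suppw; apply: Nw => _; rewrite sum_aux_p_supp // => i; exact: suppw.
Qed.
End BidProfile.

Unset Implicit Arguments.
Set Strict Implicit.

Theorem mainTheorem8 (d : measure_display) (T : measurableType d) (R : realType)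
  (P : probability T R) (n K : nat)
  (V : 'I_n -> {RV P >-> R})
  (x p : ('I_n -> 'I_K.+1) -> 'I_n -> R)
  (pis : 'I_n -> 'I_K.+1 -> R) :
  (0 < K)%N ->
  alloc_ok x -> pay_ok p -> voluntary_participation p ->
  (forall i, in_simplex (pis i)) ->
  mutually_independent P (fun i => (V i : T -> R)) ->
  (forall i, P (V i @^-1` `[0, 1]) = 1%E) ->
  (forall i, continuous (cdfR (V i) : R -> R)) ->
  let s := fun i => qstrat (cdfR (V i)) (pis i) in
  let bids := fun w l => s l (V l w) in
  (\sum_(i < n)
     'E_P[fun w => grad_dot
                     (grad x p (cdfR (V i)) (pis i) i (bids w)) (pis i)])%E
  = ('E_P[fun w => (\sum_(i < n) p (bids w) i)%R]
     - aux_rev P x s (fun i => (V i : T -> R)))%E.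
Proof.
move=> _ x_ok _ vp pis_simplex V_indep V01 F_cont s bids.
have sum_pis i : \sum_(k < K.+1) pis i k = 1 by case: (pis_simplex i).
have -> : bids = fun w => bid_profile V pis w.
  by apply: funext => w; apply: funext => l; rewrite ffunE.
have E_bid := expectation_bid_profile pis_simplex V_indep V01 F_cont.
under eq_bigr => i _ do rewrite (E_bid (fun c : {ffun 'I_n -> 'I_K.+1} =>
  grad_dot (grad x p (cdfR (V i)) (pis i) i c) (pis i))).
rewrite (E_bid (fun c : {ffun 'I_n -> 'I_K.+1} => \sum_(i < n) p c i)%R).
rewrite expectation_sum_aux_p // sumEFin -EFinB; congr EFin.
under eq_bigr do under eq_bigr do rewrite mulrC.
under eq_bigr do rewrite (expected_grad_dot x (fun j => cdfR (V j)) vp sum_pis).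
rewrite sumrB; congr (_ - _); rewrite exchange_big /=; apply: eq_bigr => c _;
  by rewrite mulr_suml; apply: eq_bigr => i _; rewrite mulrC.
Qed.
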